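(* Let $\nu:\mathcal{C}\to\mathbb{Z}$ and $\psi:\mathcal{C}\to\mathbb{R}$ be additive functions (group homomorphisms). If $\nu(\mathcal{K})=1$, then for all $\mathcal{K}'\in[\mathcal{K}]$, $\psi(\mathcal{K}')=\nu(\mathcal{K}')\,\psi(\mathcal{K})$.
   Context: $\mathcal{C}$ is the smooth knot concordance group. Let $\mathcal{C}^\circ=\mathcal{C}\setminus\{0\}$; $\mathcal{K}\sim'\mathcal{J}$ if there exist $\mathcal{M}\in\mathcal{C}$ and $r,s\in\mathbb{Z}$ with $\mathcal{K}=r\mathcal{M}$, $\mathcal{J}=s\mathcal{M}$; $\sim$ is the equivalence relation generated by $\sim'$; $[\mathcal{K}]$ denotes the $\sim$-class of $\mathcal{K}$ in $\mathbb{P}(\mathcal{C})=\mathcal{C}^\circ/\sim$. *)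

(* The smooth knot concordance group is modelled as an
   arbitrary abelian group (zmodType) C. *)
From HB Require Import structures.
From mathcomp Require Import all_boot all_order all_algebra.
From mathcomp Require Import reals.
From Stdlib Require Import Relations.
Set Implicit Arguments. Unset Strict Implicit. Unset Printing Implicit Defensive.
Import Order.TTheory GRing.Theory Num.Theory.
Local Open Scope ring_scope.

Definition sim' (C : zmodType) (K J : C) : Prop :=
  exists (M : C) (r s : int), K = M *~ r /\ J = M *~ s.

Definition nonzeroC (C : zmodType) := {x : C | x != 0}.

Definition sim'_nz (C : zmodType) : relation (nonzeroC C) :=
  fun a b => sim' (proj1_sig a) (proj1_sig b).

Definition sim (C : zmodType) (K J : C) : Prop :=
  exists (hK : K != 0) (hJ : J != 0),
    clos_refl_sym_trans (nonzeroC C) (@sim'_nz C)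
      (exist _ K hK) (exist _ J hJ).

(* the class [K] in P(C) = C°/~, as a predicate on C *)
Definition sim_class (C : zmodType) (K : C) : C -> Prop := fun K' => sim K K'.

(* Additive maps commute with integer multiples, so the relation
   psi x = nu x * psi K passes from M to every multiple M *~ s and, since a
   numeric domain has characteristic 0, back from a nonzero multiple M *~ r
   to M.  It is therefore invariant under ~', hence under the equivalence
   relation ~ generated by ~', and it holds at K because nu K = 1. *)
From HB Require Import structures.
From mathcomp Require Import all_boot all_order all_algebra.
From mathcomp Require Import reals.
From Stdlib Require Import Relations.
Set Implicit Arguments. Unset Strict Implicit.
Import Order.TTheory GRing.Theory Num.Theory.
Local Open Scope ring_scope.

Lemma clos_refl_sym_trans_iff (A : Type) (rel : relation A) (P : A -> Prop) :
  (forall a b, rel a b -> P a <-> P b) ->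
  forall a b, clos_refl_sym_trans A rel a b -> P a <-> P b.
Proof.
move=> relP a b; elim=> {a b} [a b /relP //|a //|a b _ IH|a b c _ IHab _ IHbc].
- by rewrite IH.
- by rewrite IHab.
Qed.

Lemma sim'_sym (C : zmodType) (x y : C) : sim' x y -> sim' y x.
Proof. by move=> [M [r [s [-> ->]]]]; exists M, s, r. Qed.

Section ProportionalAdditive.

Variables (C : zmodType) (R : numDomainType).
Variables (nu : {additive C -> int}) (psi : {additive C -> R}) (c : R).

Definition proportional_at (x : C) : Prop := psi x = c *~ nu x.

Lemma proportional_atMz (M : C) (s : int) :
  proportional_at M -> proportional_at (M *~ s).
Proof. by rewrite /proportional_at !raddfMz => ->. Qed.

Lemma proportional_atMz_nz (M : C) (r : int) :
  M *~ r != 0 -> proportional_at (M *~ r) -> proportional_at M.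
Proof.
move=> Mr_nz; have r_nz : r != 0 by apply: contraNneq Mr_nz => ->; rewrite mulr0z.
rewrite /proportional_at !raddfMz -[psi M *~ r]mulrzr -[c *~ nu M *~ r]mulrzr.
by apply: mulIf; rewrite intr_eq0.
Qed.

Lemma proportional_at_sim' (x y : C) :
  x != 0 -> sim' x y -> proportional_at x -> proportional_at y.
Proof.
move=> x_nz [M [r [s [def_x def_y]]]]; subst x y.
by move/(proportional_atMz_nz x_nz)/proportional_atMz.
Qed.

Lemma proportional_at_sim (x y : C) :
  sim x y -> proportional_at x -> proportional_at y.
Proof.
move=> [x_nz [y_nz xy]].
pose P (a : nonzeroC C) := proportional_at (proj1_sig a).
have sim'P a b : sim'_nz a b -> P a <-> P b.
  case: a b => [a a_nz] [b b_nz] ab.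
  by split; apply: proportional_at_sim' => //; apply: sim'_sym.
exact: (proj1 (clos_refl_sym_trans_iff sim'P xy)).
Qed.

End ProportionalAdditive.

Theorem theorem7p1 (C : zmodType) (R : realType)
  (nu : {additive C -> int}) (psi : {additive C -> R}) (K : C) :
  nu K = 1 ->
  forall K' : C, sim_class K K' -> psi K' = (nu K')%:~R * psi K.
Proof.
move=> nuK K' KK'; rewrite mulrzl.
change (proportional_at nu psi (psi K) K').
by apply: (proportional_at_sim KK'); rewrite /proportional_at nuK.
Qed.
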